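(* Let $(X,\mathcal U)$ be a non-archimedean non-discrete uniform space. Then for every $n\in\mathbb N$ the set $B_n$ of all elements of $A(X)$ of length at most $n$ has empty interior in $A_{NA}(X,\mathcal U)$.
   Context: A uniform space is non-archimedean if its (Hausdorff) uniformity has a base of equivalence relations; it is discrete if the diagonal is an entourage. $A_{NA}(X,\mathcal U)$ is the free abelian non-archimedean group of $(X,\mathcal U)$: the abelian Hausdorff group with a local base at $0$ of open subgroups, realized on the free abelian group $A(X)$, such that every uniformly continuous map from $X$ into an abelian non-archimedean group extends uniquely to a continuous homomorphism. The length of a nonzero $w=\sum_{i=1}^n k_ix_i\in A(X)$ (distinct $x_i\in X$, $k_i\in\mathbb Z\setminus\{0\}$) is $\sum_i|k_i|$; the length of $0$ is $0$. *)

From HB Require Import structures.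
From mathcomp Require Import all_boot all_order all_algebra.
From mathcomp Require Import all_classical all_reals all_analysis.
From mathcomp Require Import freeg.

Set Implicit Arguments.
Unset Strict Implicit.
Unset Printing Implicit Defensive.

Import Order.TTheory GRing.Theory Num.Theory.
Local Open Scope classical_set_scope.
Local Open Scope ring_scope.

Definition equiv_rel {X : Type} (E : set (X * X)) : Prop :=
  (forall x, E (x, x)) /\
  (forall x y, E (x, y) -> E (y, x)) /\
  (forall x y z, E (x, y) -> E (y, z) -> E (x, z)).

Definition na_uniform (X : uniformType) : Prop :=
  forall E, @entourage X E -> exists F, entourage F /\ equiv_rel F /\ F `<=` E.

Definition discrete_uniform (X : uniformType) : Prop :=
  @entourage X [set xy | xy.1 = xy.2].

Definition subgroup {G : zmodType} (H : set G) : Prop :=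
  H 0 /\ (forall x y, H x -> H y -> H (x - y)).

Definition additive_map {A B : zmodType} (h : A -> B) : Prop :=
  forall a b, h (a - b) = h a - h b.

Definition na_topgroup (G : topologicalZmodType) : Prop :=
  hausdorff_space G /\
  (forall W : set G, nbhs (0 : G) W ->
     exists H : set G, open H /\ subgroup H /\ H `<=` W).

Definition unif_cont_to_group (X : uniformType) (G : topologicalZmodType)
    (f : X -> G) : Prop :=
  forall W : set G, nbhs (0 : G) W ->
    entourage [set xy : X * X | W (f xy.2 - f xy.1)].

Definition is_topology {T : Type} (tau : set_system T) : Prop :=
  tau setT /\
  (forall F : set (set T), F `<=` tau -> tau (\bigcup_(A in F) A)) /\
  (forall A B, tau A -> tau B -> tau (A `&` B)).

Definition na_group_topology {A : zmodType} (tau : set_system A) : Prop :=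
  is_topology tau /\
  (forall (x y : A) (W : set A), tau W -> W (x - y) ->
     exists U V, [/\ tau U, tau V, U x, V y &
                    forall u v, U u -> V v -> W (u - v)]) /\
  (forall x y : A, x <> y ->
     exists U V, [/\ tau U, tau V, U x, V y & U `&` V = set0]) /\
  (forall W : set A, tau W -> W 0 ->
     exists H : set A, [/\ tau H, subgroup H & H `<=` W]).

Definition AX (X : uniformType) := {freeg X / int}.

Definition ins (X : uniformType) (x : X) : AX X := << x >>.

Definition word_length (X : uniformType) (w : AX X) : nat :=
  (\sum_(x <- dom w) `|coeff x w|)%N.

Definition B_len (X : uniformType) (n : nat) : set (AX X) :=
  [set w | (word_length w <= n)%N].

(* tau is the topology of the free abelian non-archimedean group
   A_NA(X, U) realized on A(X): (A(X), tau) is an abelian non-archimedean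
   group, the canonical map X -> A(X) is uniformly continuous, and every
   uniformly continuous map from X into an abelian non-archimedean group
   extends uniquely to a continuous homomorphism. *)
Definition is_free_na_topology (X : uniformType) (tau : set_system (AX X))
  : Prop :=
  na_group_topology tau /\
  (forall W : set (AX X), tau W -> W 0 ->
     entourage [set xy : X * X | W (ins xy.2 - ins xy.1)]) /\
  (forall (G : topologicalZmodType), na_topgroup G ->
     forall f : X -> G, unif_cont_to_group f ->
       exists! h : AX X -> G,
         [/\ additive_map h,
             (forall V : set G, open V -> tau (h @^-1` V)) &
             (forall x, h (ins x) = f x)]).

(* An open set U containing w contains w - H for some open subgroup H, by
   continuity of subtraction and the local base of open subgroups.  As the
   canonical map X -> A(X) is uniformly continuous and the diagonal is not an
   entourage, H contains y - x for two distinct points x, y, hence all of its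
   multiples m (y - x).  The coefficient of y in w - m (y - x) then grows
   linearly in m, so U is not contained in any B_n. *)
From HB Require Import structures.
From mathcomp Require Import all_boot all_order all_algebra.
From mathcomp Require Import all_classical all_reals all_analysis.
From mathcomp Require Import freeg.
From mathcomp Require Import zify.
Local Open Scope classical_set_scope.
Local Open Scope ring_scope.
Import GRing.Theory Num.Theory.

Set Implicit Arguments.
Unset Strict Implicit.
Unset Printing Implicit Defensive.

Lemma coeff_le_word_length (X : uniformType) (w : AX X) (y : X) :
  (absz (coeff y w) <= word_length w)%N.
Proof.
rewrite /word_length; have [yw|yNw] := boolP (y \in dom w).
  by rewrite (bigD1_seq y yw (uniq_dom w)) /= leq_addr.
by rewrite coeff_outdom.
Qed.

Lemma word_length_sub_mulrn_ins (X : uniformType) (w : AX X) (x y : X)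
    (m : nat) :
  x <> y -> (m <= absz (coeff y w) + word_length (w - (ins y - ins x) *+ m)%R)%N.
Proof.
move=> xy; have := @coeff_le_word_length X (w - (ins y - ins x) *+ m) y.
rewrite coeffB coeffMn coeffB /ins !coeffU eqxx.
have -> : (x == y) = false by apply/eqP.
rewrite mulr1 mulr0 subr0; set c := coeff y w; lia.
Qed.

Lemma subgroup_mulrn (G : zmodType) (H : set G) (z : G) (m : nat) :
  subgroup H -> H z -> H (z *+ m).
Proof.
move=> [H0 HB] Hz; have HN a : H a -> H (- a).
  by move=> Ha; have := HB _ _ H0 Ha; rewrite sub0r.
elim: m => [|m IH]; first by rewrite mulr0n.
by have := HB _ _ IH (HN _ Hz); rewrite opprK mulrS addrC.
Qed.

Lemma nondiscrete_entourage_offdiag (X : uniformType) (E : set (X * X)) :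
  ~ discrete_uniform X -> entourage E -> exists x y, x <> y /\ E (x, y).
Proof.
move=> nD entE; apply: contrapT => noff; apply: nD.
apply: filterS entE => -[a b] /= Eab; apply: contrapT => ab.
by apply: noff; exists a, b.
Qed.

Lemma na_group_topology_open_translate (A : zmodType) (tau : set_system A)
    (U : set A) (w : A) :
  na_group_topology tau -> tau U -> U w ->
  exists H, [/\ tau H, subgroup H & forall h, H h -> U (w - h)].
Proof.
move=> [_ [subC [_ subgroup_base]]] tU Uw.
have [U' [V [_ tV U'w V0 U'V]]] : exists U' V, [/\ tau U', tau V, U' w, V 0 &
    forall u v, U' u -> V v -> U (u - v)].
  by apply: subC; rewrite ?subr0.
have [H [tH sH HV]] := subgroup_base V tV V0.
by exists H; split=> // h Hh; apply: U'V => //; apply: HV.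
Qed.

Theorem lemma4p20 (X : uniformType) (tau : set_system (AX X)) :
  hausdorff_space X -> na_uniform X -> ~ discrete_uniform X ->
  is_free_na_topology tau ->
  forall (n : nat) (U : set (AX X)), tau U -> U `<=` @B_len X n -> U = set0.
Proof.
move=> _ _ nD [naTau [insUC _]] n U tU UB.
apply/seteqP; split => // w Uw; exfalso.
have [H [tH sH wH]] := na_group_topology_open_translate naTau tU Uw.
have [x [y [xy Hyx]]] := nondiscrete_entourage_offdiag nD (insUC H tH sH.1).
set m := (absz (coeff y w) + n).+1.
have := word_length_sub_mulrn_ins w m xy.
have : (word_length (w - (ins y - ins x) *+ m)%R <= n)%N.
  by apply: UB; apply: wH; apply: subgroup_mulrn.
rewrite /m; lia.
Qed.
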